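(* Let $(X,\mathcal B)$ be any $(K_4-e)$-design of order $11$, and let $D=\{\{x,y\}:\ [x,y,z-u]\in\mathcal B\}$ and $N=\{\{z,u\}:\ [x,y,z-u]\in\mathcal B\}$. Then $D\cap N=\emptyset$.
   Context: $K_4-e$ is the graph on four vertices $a,b,c,d$ with edges $ab,ac,ad,bc,bd$; it is denoted $[a,b,c-d]$ (so in $[x,y,z-u]$ the vertices $x,y$ have degree $3$, $z,u$ have degree $2$, and $zu$ is the missing edge). A $(K_4-e)$-design of order $v$ is a pair $(X,\mathcal B)$ where $X$ is a set of $v$ vertices and $\mathcal B$ is a collection of copies of $K_4-e$ (called blocks) with vertices in $X$ whose edge sets partition the edge set of the complete graph $K_v$ on $X$. *)

From mathcomp Require Import all_boot.
Set Implicit Arguments. Unset Strict Implicit. Unset Printing Implicit Defensive.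

(* A copy of K_4 - e, written [a,b,c-d]: vertices a b c d (pairwise distinct),
   edges ab, ac, ad, bc, bd; the missing edge is cd.  Represented by the
   quadruple (a, b, c, d). *)
Definition k4e (T : Type) := (T * T * T * T)%type.

Section K4e.
Variable T : finType.

Definition kA (B : k4e T) : T := B.1.1.1.
Definition kB (B : k4e T) : T := B.1.1.2.
Definition kC (B : k4e T) : T := B.1.2.
Definition kD (B : k4e T) : T := B.2.

Definition k4e_ok (B : k4e T) : bool :=
  uniq [:: kA B; kB B; kC B; kD B].

Definition same_upair (p q : T * T) : bool :=
  ((p.1 == q.1) && (p.2 == q.2)) || ((p.1 == q.2) && (p.2 == q.1)).

Definition k4e_edges (B : k4e T) : seq (T * T) :=
  [:: (kA B, kB B); (kA B, kC B); (kA B, kD B); (kB B, kC B); (kB B, kD B)].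

Definition k4e_covers (B : k4e T) (x y : T) : nat :=
  count (same_upair (x, y)) (k4e_edges B).

Definition k4e_design (blocks : seq (k4e T)) : Prop :=
  (forall B, B \in blocks -> k4e_ok B) /\
  (forall x y : T, x != y -> sumn [seq k4e_covers B x y | B <- blocks] = 1).

Definition dpair (B : k4e T) : T * T := (kA B, kB B).
Definition npair (B : k4e T) : T * T := (kC B, kD B).
End K4e.

From Stdlib Require Import NArith.
From mathcomp Require Import all_boot.
Set Implicit Arguments. Unset Strict Implicit. Unset Printing Implicit Defensive.

(* Suppose {x, y} is the D-pair of a block [x,y,c-d] and the N-pair of a block
   [a,b,x-y].  The six vertices x, y, c, d, a, b are distinct: a vertex common
   to {c, d} and {a, b} would be joined to x in both blocks.  Relabelling the
   points as 0, ..., 10 with these six first, the two blocks become [0,1,2-3]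
   and [4,5,0-1], and an exhaustive backtracking search shows that the 45
   remaining edges of K_11 cannot be decomposed into copies of K_4 - e.  The
   search stores the uncovered edges as adjacency bitmasks and branches on the
   blocks that can cover a chosen uncovered edge; it is proved sound, i.e. it
   succeeds on every state arising from an actual design. *)


Section Blocks.
Variable T : finType.

Definition k4e_map (U : Type) (f : T -> U) (B : k4e T) : k4e U :=
  (f (kA B), f (kB B), f (kC B), f (kD B)).

Lemma k4e_coversC (B : k4e T) x y : k4e_covers B x y = k4e_covers B y x.
Proof. by apply: eq_count => e; rewrite /same_upair /= orbC andbC [(x == _) && _]andbC. Qed.

Lemma k4e_covers_edge (B : k4e T) e x y :
  e \in k4e_edges B -> same_upair (x, y) e -> 0 < k4e_covers B x y.
Proof. by move=> e_in xy_e; rewrite /k4e_covers -has_count; apply/hasP; exists e. Qed.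

Lemma k4e_covers_DN (B : k4e T) u v :
  u \in [:: kA B; kB B] -> v \in [:: kC B; kD B] -> 0 < k4e_covers B u v.
Proof.
move=> Du Nv; apply: (@k4e_covers_edge _ (u, v)); last by rewrite /same_upair !eqxx.
by move: Du Nv; rewrite /k4e_edges !inE => /orP[]/eqP-> /orP[]/eqP->; rewrite eqxx ?orbT.
Qed.

Variable blocks : seq (k4e T).
Hypothesis design : k4e_design blocks.

Lemma k4e_design_pair x y : x != y ->
  exists B, [/\ B \in blocks, k4e_covers B x y = 1
              & forall B', B' != B -> B' \in blocks -> k4e_covers B' x y = 0].
Proof.
move=> neq_xy; have := design.2 x y neq_xy; rewrite sumnE big_map.
by case/sum_nat_seq_eq1 => B [B_in _ cov1 cov0]; exists B; split=> // B' ? ?; apply: cov0.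
Qed.

Lemma k4e_design_block_unique x y B B' : x != y -> B \in blocks -> B' \in blocks ->
  0 < k4e_covers B x y -> 0 < k4e_covers B' x y -> B = B'.
Proof.
move=> neq_xy B_in B'_in; have [B0 [_ _ cov0]] := k4e_design_pair neq_xy.
have eqB0 X : X \in blocks -> 0 < k4e_covers X x y -> X = B0.
  by move=> X_in; apply: contraTeq => /cov0 /(_ X_in) ->.
by move=> /(eqB0 _ B_in) -> /(eqB0 _ B'_in).
Qed.

Lemma dpair_npair_uniq x y c d a b c' d' :
  (x, y, c, d) \in blocks -> (a, b, c', d') \in blocks -> same_upair (x, y) (c', d') ->
  uniq [:: x; y; c; d; a; b].
Proof.
move=> B1_in B2_in; rewrite /same_upair /= => xy_cd'.
move: (design.1 _ B1_in) (design.1 _ B2_in); rewrite /k4e_ok /kA /kB /kC /kD /= !inE !negb_or.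
move=> /and4P[/and3P[xy xc xd] /andP[yc yd] cd _] /and4P[/and3P[ab ac' ad'] /andP[bc' bd'] _ _].
have [x_N2 [a_x a_y b_x b_y]] : x \in [:: c'; d'] /\ [/\ a != x, a != y, b != x & b != y].
  by case/orP: xy_cd' => /andP[/eqP xc' /eqP yd']; subst c' d';
    rewrite !inE eqxx ?orbT; do !split; rewrite // eq_sym.
have cross u : u \in [:: c; d] -> u \notin [:: a; b].
  move=> u_N1; apply/negP => u_D2.
  have xu : x != u by move: u_N1; rewrite !inE => /orP[]/eqP->.
  have cov1 : 0 < k4e_covers (x, y, c, d) x u by apply: k4e_covers_DN; rewrite //= inE eqxx.
  have cov2 : 0 < k4e_covers (a, b, c', d') x u by rewrite k4e_coversC; apply: k4e_covers_DN.
  by case: (k4e_design_block_unique xu B1_in B2_in cov1 cov2) => eq_ax; rewrite eq_ax eqxx in a_x.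
move: (cross c) (cross d); rewrite !inE !eqxx ?orbT !negb_or.
move=> /(_ isT)/andP[ca cb] /(_ isT)/andP[da db].
by rewrite /= xy xc xd yc yd cd ab ca cb da db !(eq_sym _ a) !(eq_sym _ b) a_x a_y b_x b_y.
Qed.

End Blocks.

Section Relabel.
Variables (T : finType) (S : seq T).

Definition relabel_seq : seq T := S ++ [seq t <- enum T | t \notin S].

Definition relabel (t : T) : nat := index t relabel_seq.

Lemma mem_relabel_seq t : t \in relabel_seq.
Proof. by rewrite mem_cat mem_filter mem_enum andbT orbN. Qed.

Lemma relabel_inj : injective relabel.
Proof.
move=> t t' eq_tt'; rewrite -(nth_index t (mem_relabel_seq t)).
by rewrite -(nth_index t (mem_relabel_seq t')) -/(relabel _) eq_tt'.
Qed.

Hypothesis S_uniq : uniq S.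

Lemma relabel_seq_uniq : uniq relabel_seq.
Proof.
rewrite cat_uniq S_uniq filter_uniq ?enum_uniq // andbT.
by apply/hasPn => t; rewrite mem_filter => /andP[].
Qed.

Lemma size_relabel_seq : size relabel_seq = #|T|.
Proof.
rewrite cardE; apply/perm_size/uniq_perm; rewrite ?enum_uniq ?relabel_seq_uniq //.
by move=> t; rewrite mem_relabel_seq mem_enum.
Qed.

Lemma relabel_lt_card t : relabel t < #|T|.
Proof. by rewrite -size_relabel_seq index_mem mem_relabel_seq. Qed.

Lemma relabel_nth t0 k : k < #|T| -> relabel (nth t0 relabel_seq k) = k.
Proof. by rewrite -size_relabel_seq => lt_k; rewrite /relabel index_uniq ?relabel_seq_uniq. Qed.

Lemma relabel_nth_prefix t0 k : k < size S -> relabel (nth t0 S k) = k.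
Proof.
move=> lt_k; have lt_kT : k < #|T| by rewrite -size_relabel_seq size_cat ltn_addr.
have := nth_cat t0 S [seq t <- enum T | t \notin S] k; rewrite lt_k => <-.
exact: relabel_nth.
Qed.

End Relabel.

Definition quad_edges (q : k4e nat) : seq (nat * nat) :=
  let: (a, b, c, d) := q in [:: (a, b); (a, c); (a, d); (b, c); (b, d)].

Definition quad_adj (q : k4e nat) (i j : nat) : bool :=
  has (fun e => ((i == e.1) && (j == e.2)) || ((i == e.2) && (j == e.1))) (quad_edges q).

Definition quad_ok (q : k4e nat) : bool :=
  let: (a, b, c, d) := q in [&& a < 11, b < 11, c < 11, d < 11 & uniq [:: a; b; c; d]].

Lemma quad_adjC q i j : quad_adj q i j = quad_adj q j i.
Proof. by apply: eq_has => e /=; rewrite orbC andbC [(i == _) && _]andbC. Qed.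

Lemma quad_adj_swapD a b c d : quad_adj (b, a, c, d) =2 quad_adj (a, b, c, d).
Proof.
move=> i j; rewrite /quad_adj /= !orbF.
by case: (i == a); case: (i == b); case: (i == c); case: (i == d);
   case: (j == a); case: (j == b); case: (j == c); case: (j == d).
Qed.

Lemma quad_adj_swapN a b c d : quad_adj (a, b, d, c) =2 quad_adj (a, b, c, d).
Proof.
move=> i j; rewrite /quad_adj /= !orbF.
by case: (i == a); case: (i == b); case: (i == c); case: (i == d);
   case: (j == a); case: (j == b); case: (j == c); case: (j == d).
Qed.

Lemma quad_adj_ok q i j : quad_ok q -> quad_adj q i j -> [&& i < 11, j < 11 & i != j].
Proof.
case: q => [[[a b] c] d] /and5P[a11 b11 c11 d11].
rewrite /= !inE !negb_or => /and4P[/and3P[ab ac ad] /andP[bc bd] cd _].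
rewrite /quad_adj /= !orbF => adj.
by repeat case/orP: adj => adj; case/andP: adj => /eqP-> /eqP->;
   rewrite ?a11 ?b11 ?c11 ?d11 // eq_sym.
Qed.

Lemma quad_adj_map (T : finType) (f : T -> nat) (B : k4e T) t t' : injective f ->
  quad_adj (k4e_map f B) (f t) (f t') = (0 < k4e_covers B t t').
Proof.
move=> f_inj; rewrite /k4e_covers -has_count /quad_adj.
have -> : quad_edges (k4e_map f B) = [seq (f e.1, f e.2) | e <- k4e_edges B] by [].
by rewrite has_map; apply: eq_has => e; rewrite /same_upair /= !(inj_eq f_inj).
Qed.

Record labelled_design (D : seq (k4e nat)) : Prop := {
  labelled_ok : forall q, q \in D -> quad_ok q;
  labelled_cover : forall v u, v < 11 -> u < 11 -> v != u ->
    exists2 q, q \in D & quad_adj q v u;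
  labelled_unique : forall q q', q \in D -> q' \in D ->
    forall i j, quad_adj q i j -> quad_adj q' i j -> q = q' }.

Section LabelledDesign.
Variables (T : finType) (blocks : seq (k4e T)) (f : T -> nat).
Hypotheses (design : k4e_design blocks) (f_inj : injective f).
Hypotheses (f_lt : forall t, f t < 11) (f_onto : forall k, k < 11 -> exists t, f t = k).

Lemma quad_ok_map B : B \in blocks -> quad_ok (k4e_map f B).
Proof.
move=> B_in; have := design.1 B B_in; rewrite /k4e_ok -(map_inj_uniq f_inj) => ok_B.
by apply/and5P; split; rewrite ?f_lt.
Qed.

Lemma labelled_design_map : labelled_design [seq k4e_map f B | B <- blocks].
Proof.
split=> [_ /mapP[B B_in ->] | v u /f_onto[t <-] /f_onto[t' <-] | ].
- exact: quad_ok_map.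
- rewrite (inj_eq f_inj) => neq_tt'.
  have [B [B_in cov _]] := k4e_design_pair design neq_tt'.
  by exists (k4e_map f B); [exact: map_f | rewrite quad_adj_map // cov].
move=> _ _ /mapP[B B_in ->] /mapP[B' B'_in ->] i j adj.
have /and3P[/f_onto[t Et] /f_onto[t' Et'] neq_ij] := quad_adj_ok (quad_ok_map B_in) adj.
move: adj neq_ij; rewrite -Et -Et' (inj_eq f_inj) !quad_adj_map // => cov neq_tt' cov'.
by rewrite (k4e_design_block_unique design neq_tt' B_in B'_in cov cov').
Qed.

End LabelledDesign.

Definition bit (j : nat) : N := N.pow 2 (N.of_nat j).

Definition uncovered (s : seq N) (i j : nat) : bool :=
  (i < 11) && N.testbit (nth N0 s i) (N.of_nat j).

Definition adj_mask (q : k4e nat) (i : nat) : N :=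
  foldr N.lor N0 [seq N.lor (if i == e.1 then bit e.2 else N0)
                            (if i == e.2 then bit e.1 else N0) | e <- quad_edges q].

Definition cover (s : seq N) (q : k4e nat) : seq N :=
  [seq N.ldiff (nth N0 s i) (adj_mask q i) | i <- iota 0 11].

Definition complete_state : seq N :=
  [seq foldr N.lor N0 [seq if j != i then bit j else N0 | j <- iota 0 11] | i <- iota 0 11].

(* Written out so that evaluation does not recompute [N.of_nat]. *)
Definition bits11 : seq (nat * N) :=
  [:: (0, 0%num); (1, 1%num); (2, 2%num); (3, 3%num); (4, 4%num); (5, 5%num);
      (6, 6%num); (7, 7%num); (8, 8%num); (9, 9%num); (10, 10%num)].

Definition mask_elems (m : N) : seq nat := [seq p.1 | p <- bits11 & N.testbit m p.2].

Lemma testbit_bit j k : N.testbit (bit j) (N.of_nat k) = (j == k).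
Proof.
rewrite /bit N.pow2_bits_eqb; apply/idP/eqP => [/N.eqb_eq/Nat2N.inj // | ->].
exact/N.eqb_eq.
Qed.

Lemma testbit_lor_foldr (l : seq N) n :
  N.testbit (foldr N.lor N0 l) n = has (N.testbit^~ n) l.
Proof. by elim: l => [|m l IH] /=; rewrite ?N.bits_0 ?N.lor_spec ?IH. Qed.

Lemma testbit_if (b : bool) m n : N.testbit (if b then m else N0) n = b && N.testbit m n.
Proof. by case: b; rewrite ?N.bits_0. Qed.

Lemma testbit_adj_mask q i j : N.testbit (adj_mask q i) (N.of_nat j) = quad_adj q i j.
Proof.
rewrite /adj_mask testbit_lor_foldr has_map; apply: eq_has => e /=.
by rewrite N.lor_spec !testbit_if !testbit_bit [e.2 == j]eq_sym [e.1 == j]eq_sym.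
Qed.

Lemma uncovered_cover s q i j : uncovered (cover s q) i j = uncovered s i j && ~~ quad_adj q i j.
Proof.
rewrite /uncovered /cover; case: ltnP => // lt_i.
by rewrite (nth_map 0) ?size_iota // nth_iota // add0n N.ldiff_spec testbit_adj_mask.
Qed.

Lemma uncovered_complete i j : uncovered complete_state i j = [&& i < 11, j < 11 & i != j].
Proof.
rewrite /uncovered /complete_state; case: ltnP => // lt_i.
rewrite (nth_map 0) ?size_iota // nth_iota // add0n testbit_lor_foldr has_map.
apply/hasP/idP => [[k] | /and3P[_ lt_j neq_ij]]; last first.
  by exists j; rewrite ?mem_iota ?lt_j //= testbit_if testbit_bit eqxx eq_sym neq_ij.
rewrite mem_iota /= testbit_if testbit_bit => lt_k /andP[neq_ki /eqP <-].
by rewrite lt_k eq_sym neq_ki.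
Qed.

Lemma mem_mask_elems m j : (j \in mask_elems m) = (j < 11) && N.testbit m (N.of_nat j).
Proof.
rewrite /mask_elems (_ : bits11 = [seq (k, N.of_nat k) | k <- iota 0 11]) //.
by rewrite filter_map -map_comp map_id mem_filter mem_iota andbC.
Qed.

Lemma quad_ok_swapD a b c d : quad_ok (b, a, c, d) = quad_ok (a, b, c, d).
Proof.
rewrite /quad_ok /= !inE !negb_or (eq_sym b a).
by case: (a < 11); case: (b < 11); case: (a == b); case: (a == c); case: (a == d);
   case: (b == c); case: (b == d).
Qed.

Lemma quad_ok_swapN a b c d : quad_ok (a, b, d, c) = quad_ok (a, b, c, d).
Proof.
rewrite /quad_ok /= !inE !negb_or (eq_sym d c).
by case: (c < 11); case: (d < 11); case: (a == c); case: (a == d); case: (b == c);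
   case: (b == d); case: (c == d).
Qed.

Definition common (s : seq N) (v u : nat) : seq nat :=
  mask_elems (N.land (nth N0 s v) (nth N0 s u)).

(* The edge vu of a block [a,b,c-d] is its D-pair, or joins a D-vertex to an
   N-vertex in one of the two directions; blocks are listed up to the
   symmetries a <-> b and c <-> d. *)
Definition candidates (s : seq N) (v u : nat) : seq (k4e nat) :=
  let W := common s v u in
  [seq (v, u, c, d) | c <- W, d <- [seq d <- W | c < d]] ++
  [seq (v, w, u, t) | w <- W, t <- [seq t <- common s v w | t != u]] ++
  [seq (u, w, v, t) | w <- W, t <- [seq t <- common s u w | t != v]].

Definition all_uncovered (s : seq N) (q : k4e nat) : Prop :=
  forall i j, quad_adj q i j -> uncovered s i j.

Lemma mem_common s v u w : w < 11 -> uncovered s v w -> uncovered s u w ->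
  w \in common s v u.
Proof. by move=> lt_w /andP[_ vw] /andP[_ uw]; rewrite mem_mask_elems lt_w N.land_spec vw uw. Qed.

Section Candidates.
Variables (s : seq N) (v u : nat).

Definition candidate_for (q : k4e nat) : Prop :=
  exists2 q', q' \in candidates s v u & quad_adj q' =2 quad_adj q.

Lemma candidate_for_D c d : quad_ok (v, u, c, d) -> all_uncovered s (v, u, c, d) ->
  candidate_for (v, u, c, d).
Proof.
move=> /and5P[_ _ lt_c lt_d]; rewrite /= !inE !negb_or => /and4P[_ _ neq_cd _] unc.
have com_c : c \in common s v u by apply: mem_common; rewrite ?unc // /quad_adj /= !eqxx ?orbT.
have com_d : d \in common s v u by apply: mem_common; rewrite ?unc // /quad_adj /= !eqxx ?orbT.
case: (ltngtP c d) => [lt_cd | lt_dc | eq_cd]; last by rewrite eq_cd eqxx in neq_cd.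
- exists (v, u, c, d) => //; rewrite mem_cat; apply/orP; left.
  by apply/allpairsPdep; exists c, d; rewrite mem_filter lt_cd.
- exists (v, u, d, c); last exact: quad_adj_swapN.
  rewrite mem_cat; apply/orP; left.
  by apply/allpairsPdep; exists d, c; rewrite mem_filter lt_dc.
Qed.

Lemma candidate_for_DN w t : quad_ok (v, w, u, t) -> all_uncovered s (v, w, u, t) ->
  candidate_for (v, w, u, t).
Proof.
move=> /and5P[_ lt_w _ lt_t]; rewrite /= !inE !negb_or => /and4P[_ _ neq_ut _] unc.
exists (v, w, u, t) => //; rewrite !mem_cat; apply/orP; right; apply/orP; left.
apply/allpairsPdep; exists w, t; rewrite mem_filter eq_sym neq_ut.
by split=> //; apply: mem_common; rewrite ?unc // /quad_adj /= !eqxx ?orbT.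
Qed.

Lemma candidate_for_ND w t : quad_ok (u, w, v, t) -> all_uncovered s (u, w, v, t) ->
  candidate_for (u, w, v, t).
Proof.
move=> /and5P[_ lt_w _ lt_t]; rewrite /= !inE !negb_or => /and4P[_ _ neq_vt _] unc.
exists (u, w, v, t) => //; rewrite !mem_cat; apply/orP; right; apply/orP; right.
apply/allpairsPdep; exists w, t; rewrite mem_filter eq_sym neq_vt.
by split=> //; apply: mem_common; rewrite ?unc // /quad_adj /= !eqxx ?orbT.
Qed.

Lemma candidate_for_variant q q' : quad_adj q' =2 quad_adj q -> quad_ok q' = quad_ok q ->
  (quad_ok q' -> all_uncovered s q' -> candidate_for q') ->
  quad_ok q -> all_uncovered s q -> candidate_for q.
Proof.
move=> adj' ok' cand_q' ok unc; have [|i j|r r_in adj_r] := cand_q'; rewrite ?ok' //.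
  by rewrite adj'; apply: unc.
by exists r => // i j; rewrite adj_r adj'.
Qed.

Lemma candidates_complete q : quad_ok q -> all_uncovered s q -> quad_adj q v u ->
  candidate_for q.
Proof.
case: q => [[[a b] c] d] + + adj; rewrite /quad_adj /= !orbF in adj.
have swD := candidate_for_variant (quad_adj_swapD _ _ _ _) (quad_ok_swapD _ _ _ _).
have swN := candidate_for_variant (quad_adj_swapN _ _ _ _) (quad_ok_swapN _ _ _ _).
(* the ordered edges ab, ba, ac, ca, ad, da, bc, cb, bd, db *)
repeat case/orP: adj => adj; case/andP: adj => /eqP <- /eqP <-.
- exact: candidate_for_D.
- exact/swD/candidate_for_D.
- exact: candidate_for_DN.
- exact: candidate_for_ND.
- exact/swN/candidate_for_DN.
- exact/swN/candidate_for_ND.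
- exact/swD/candidate_for_DN.
- exact/swD/candidate_for_ND.
- exact/swN/swD/candidate_for_DN.
- exact/swN/swD/candidate_for_ND.
Qed.

End Candidates.

Definition pick_edge (s : seq N) : option (nat * nat) :=
  let best := foldl (fun (acc : nat * nat) v =>
      let c := size (mask_elems (nth N0 s v)) in
      if (0 < c) && (c < acc.1) then (c, v) else acc) (99, 0) (iota 0 11) in
  if best.1 == 99 then None else
  let v := best.2 in
  if mask_elems (nth N0 s v) is u :: _ then Some (v, u) else None.

(* Every way out of the search (no fuel, no edge left, an unexpected answer of
   [pick_edge]) returns [true], so only [true] is ever claimed without proof. *)
Fixpoint search (fuel : nat) (s : seq N) : bool :=
  if fuel is f.+1 then
    if pick_edge s is Some (v, u) then
      if [&& u < 11, v != u & uncovered s v u] then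
        has (fun q => search f (cover s q)) (candidates s v u)
      else true
    else true
  else true.

Section Search.
Variable D : seq (k4e nat).
Hypothesis design : labelled_design D.

Definition consistent (s : seq N) : Prop :=
  (forall i j, uncovered s i j = uncovered s j i) /\
  (forall B, B \in D -> all_uncovered s B \/ forall i j, quad_adj B i j -> ~~ uncovered s i j).

Lemma consistent_complete : consistent complete_state.
Proof.
split=> [i j | B B_in]; first by rewrite !uncovered_complete eq_sym andbCA.
by left=> i j adj; rewrite uncovered_complete (quad_adj_ok (labelled_ok design B_in) adj).
Qed.

Lemma consistent_cover s B0 q : consistent s -> B0 \in D -> quad_adj q =2 quad_adj B0 ->
  consistent (cover s q).
Proof.
move=> [sym_s blocks_s] B0_in adj_q; split=> [i j | B B_in].
  by rewrite !uncovered_cover sym_s quad_adjC.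
have [unc_B | cov_B] := blocks_s B B_in; last first.
  by right=> i j adj; rewrite uncovered_cover negb_and cov_B.
have [-> | neq_B] := eqVneq B B0.
  by right=> i j adj; rewrite uncovered_cover adj_q adj andbF.
left=> i j adj; rewrite uncovered_cover adj_q unc_B //=.
by apply: contra neq_B => adj0; rewrite (labelled_unique design B_in B0_in adj adj0).
Qed.

Lemma search_sound n s : consistent s -> search n s.
Proof.
elim: n s => [|n IH] s cons_s //=.
case: (pick_edge s) => [[v u]|] //; case: ifP => // /and3P[lt_u neq_vu unc_vu].
have lt_v : v < 11 by case/andP: unc_vu.
have [B0 B0_in adj_vu] := labelled_cover design lt_v lt_u neq_vu.
have unc_B0 : all_uncovered s B0.
  by case: (cons_s.2 B0 B0_in) => // /(_ v u adj_vu); rewrite unc_vu.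
have [q q_in adj_q] := candidates_complete (labelled_ok design B0_in) unc_B0 adj_vu.
by apply/hasP; exists q => //; apply/IH/(consistent_cover cons_s B0_in).
Qed.

End Search.

Lemma search_no_clash : search 12 (cover (cover complete_state (0, 1, 2, 3)) (4, 5, 0, 1)) = false.
Proof. by vm_compute. Qed.

Lemma labelled_design_no_clash D q : labelled_design D ->
  (0, 1, 2, 3) \in D -> q \in D -> quad_adj q =2 quad_adj (4, 5, 0, 1) -> False.
Proof.
move=> design B1_in q_in adj_q.
have cons0 := consistent_cover design (consistent_complete design) B1_in (fun _ _ => erefl).
have := consistent_cover design cons0 q_in (fun i j => esym (adj_q i j)).
by move/(search_sound design 12); rewrite search_no_clash.
Qed.

Theorem lemma3p2 (T : finType) (blocks : seq (k4e T)) :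
  #|T| = 11 -> k4e_design blocks ->
  forall B1 B2, B1 \in blocks -> B2 \in blocks ->
    ~~ same_upair (dpair B1) (npair B2).
Proof.
move=> card_T design [[[x y] c] d] [[[a b] c'] d'] B1_in B2_in; apply/negP => clash.
pose S := [:: x; y; c; d; a; b]; pose f := relabel S.
have S_uniq : uniq S := dpair_npair_uniq design B1_in B2_in clash.
have f_lt t : f t < 11 by rewrite -card_T relabel_lt_card.
have f_onto k : k < 11 -> exists t, f t = k.
  by rewrite -card_T => lt_k; exists (nth x (relabel_seq S) k); apply: relabel_nth.
have fS k : k < 6 -> f (nth x S k) = k := @relabel_nth_prefix _ S S_uniq x k.
have [fx fy fc fd] : [/\ f x = 0, f y = 1, f c = 2 & f d = 3] :=
  And4 (fS 0 isT) (fS 1 isT) (fS 2 isT) (fS 3 isT).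
have [fa fb] : f a = 4 /\ f b = 5 := conj (fS 4 isT) (fS 5 isT).
have design_f := @labelled_design_map _ _ f design (@relabel_inj _ S) f_lt f_onto.
apply: (labelled_design_no_clash design_f _ (map_f _ B2_in)).
  by rewrite (_ : (0, 1, 2, 3) = k4e_map f (x, y, c, d)) ?map_f // /k4e_map /= fx fy fc fd.
move: clash; rewrite /same_upair /= /kA /kB /kC /kD /=.
case/orP=> /andP[/eqP <- /eqP <-] i j; rewrite /k4e_map /kA /kB /kC /kD /= fx fy fa fb //.
exact: quad_adj_swapN.
Qed.
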